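(* Let $n\ge 2$ and let $e_1,\dots,e_n$ be the standard basis vectors of $\mathbb{C}^n$; write $\iota=\sqrt{-1}$. For each $s$, $rank_{cps}(e_s\otimes e_s\otimes e_s\otimes e_s)=1$. For $s\neq t$, the tensor $\mathcal{E}^{sstt}:=e_s\otimes e_s\otimes e_t\otimes e_t+e_t\otimes e_t\otimes e_s\otimes e_s$ satisfies $rank_{cps}(\mathcal{E}^{sstt})=4$, and \[ \mathcal{E}^{sstt}=\tfrac14\Big[(e_s+e_t)^{\otimes 4}+(e_s-e_t)^{\otimes 4}-(e_s+\iota e_t)^{\otimes 2}\otimes(e_s-\iota e_t)^{\otimes 2}-(e_s-\iota e_t)^{\otimes 2}\otimes(e_s+\iota e_t)^{\otimes 2}\Big] \] is a CPS rank decomposition of it.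
   Context: A tensor $\mathcal{A}\in\mathbb{C}^{n\times n\times n\times n}$ is conjugate partial-symmetric (CPS) if $\mathcal{A}_{ijkl}=\overline{\mathcal{A}_{klij}}$ and $\mathcal{A}_{ijkl}=\mathcal{A}_{jikl}=\mathcal{A}_{ijlk}$ for all indices. Every CPS tensor can be written as $\mathcal{A}=\sum_{i=1}^r\lambda_i a_i\otimes a_i\otimes\bar a_i\otimes\bar a_i$ with $\lambda_i\in\mathbb{R}$, $a_i\in\mathbb{C}^n$ (a CPS decomposition); the smallest such $r$ is the CPS rank $rank_{cps}(\mathcal{A})$, and a CPS decomposition with $r=rank_{cps}(\mathcal{A})$ terms is a CPS rank decomposition. Here $(u\otimes v\otimes w\otimes z)_{ijkl}=u_iv_jw_kz_l$ and $x^{\otimes d}$ is the $d$-fold tensor product of $x$ with itself. *)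

From mathcomp Require Import all_boot all_algebra.
From mathcomp Require Import complex Rstruct.
Set Implicit Arguments. Unset Strict Implicit. Unset Printing Implicit Defensive.
Import GRing.Theory Num.Theory.
Local Open Scope ring_scope.

Notation C := (Rdefinitions.R)[i].

Definition vec (n : nat) := 'I_n -> C.
Definition tensor4 (n : nat) := 'I_n -> 'I_n -> 'I_n -> 'I_n -> C.

Definition outer4 n (u v w z : vec n) : tensor4 n :=
  fun i j k l => u i * v j * w k * z l.

Definition tadd n (A B : tensor4 n) : tensor4 n := fun i j k l => A i j k l + B i j k l.
Definition tscale n (c : C) (A : tensor4 n) : tensor4 n := fun i j k l => c * A i j k l.

Definition tpow4 n (x : vec n) : tensor4 n := outer4 x x x x.

Definition vconj n (a : vec n) : vec n := fun i => (a i)^*.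
Definition vadd n (u v : vec n) : vec n := fun i => u i + v i.
Definition vscale n (c : C) (u : vec n) : vec n := fun i => c * u i.

Definition ebasis n (s : 'I_n) : vec n := fun i => (i == s)%:R.

Definition is_CPS n (A : tensor4 n) : Prop :=
  forall i j k l,
    A i j k l = (A k l i j)^* /\ A i j k l = A j i k l /\ A i j k l = A i j l k.

Definition cps_decomp n (A : tensor4 n) (r : nat) (lam : 'I_r -> C) (a : 'I_r -> vec n)
  : Prop :=
  (forall m, lam m \is Num.real) /\
  (forall i j k l,
     A i j k l = \sum_(m < r) lam m * outer4 (a m) (a m) (vconj (a m)) (vconj (a m)) i j k l).

Definition has_cps_decomp n (A : tensor4 n) (r : nat) : Prop :=
  exists lam a, @cps_decomp n A r lam a.

Definition cps_rank n (A : tensor4 n) (r : nat) : Prop :=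
  is_CPS A /\ @has_cps_decomp n A r /\ (forall r', @has_cps_decomp n A r' -> (r <= r')%N).

Definition cps_rank_decomp n (A : tensor4 n) (r : nat) (lam : 'I_r -> C) (a : 'I_r -> vec n)
  : Prop := cps_rank A r /\ @cps_decomp n A r lam a.

Definition Esstt n (s t : 'I_n) : tensor4 n :=
  tadd (outer4 (ebasis s) (ebasis s) (ebasis t) (ebasis t))
       (outer4 (ebasis t) (ebasis t) (ebasis s) (ebasis s)).

From mathcomp Require Import all_boot all_order all_algebra.
From mathcomp Require Import complex Rstruct ring.
From Stdlib Require Import FunctionalExtensionality.
Import Order.TTheory GRing.Theory Num.Theory.
Local Open Scope ring_scope.
Set Implicit Arguments. Unset Strict Implicit.

(* Test the tensor against vectors supported on the positions ss, st, tt of its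
   (ij),(kl) unfolding.  For E^{sstt} this yields the indefinite Hermitian form
   2 Re (conj y1 * y3), while a CPS decomposition writes it as
   sum_m lam_m |L_m(y)|^2, where L_m has the Veronese coefficients
   (x^2, x y, y^2)^* of (x, y) = (a_m s, a_m t).  No single term lam |L|^2 can
   compensate this form, multiplied by either sign: if x y <> 0 then L vanishes
   at a point where the form is nonzero, otherwise L ignores one of y1, y3,
   which can be taken large.  So after deleting any one term, terms of both
   signs remain: there are two positive and two negative weights. *)

(* [rmorphD] and friends produce conjugations through another instance path,
   which then no longer match [conjCK] or hypotheses about [_^*]. *)
Lemma conjCD (a b : C) : (a + b)^* = a^* + b^*. Proof. exact: rmorphD. Qed.
Lemma conjCM (a b : C) : (a * b)^* = a^* * b^*. Proof. exact: rmorphM. Qed.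
Lemma conjCN (a : C) : (- a)^* = - a^*. Proof. exact: rmorphN. Qed.
Lemma conjC_sum r (F : 'I_r -> C) : (\sum_(m < r) F m)^* = \sum_(m < r) (F m)^*.
Proof. exact: rmorph_sum. Qed.

Definition veronese_form (x y y1 y2 y3 : C) : C :=
  (x * x)^* * y1 + (x * y)^* * y2 + (y * y)^* * y3.

Definition cross_form (y1 y3 : C) : C := y1^* * y3 + y3^* * y1.

Lemma veronese_formC (x y y1 y2 y3 : C) :
  veronese_form x y y1 y2 y3 = veronese_form y x y3 y2 y1.
Proof. by rewrite /veronese_form [y * x]mulrC addrC [_ + (_ * y2)]addrC addrA. Qed.

Lemma cross_formC (y1 y3 : C) : cross_form y1 y3 = cross_form y3 y1.
Proof. exact: addrC. Qed.

(* [y^* M y] for the n^2 x n^2 unfolding [M_(ij),(kl) = A i j k l] and the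
   vector [y] with entries y1, y2, y3 at the positions ss, st, tt. *)
Definition unfold_form n (A : tensor4 n) (s t : 'I_n) (y1 y2 y3 : C) : C :=
   y1^* * A s s s s * y1 + y1^* * A s s s t * y2 + y1^* * A s s t t * y3
 + (y2^* * A s t s s * y1 + y2^* * A s t s t * y2 + y2^* * A s t t t * y3)
 + (y3^* * A t t s s * y1 + y3^* * A t t s t * y2 + y3^* * A t t t t * y3).

Lemma unfold_form_Esstt n (s t : 'I_n) (y1 y2 y3 : C) : s != t ->
  unfold_form (Esstt s t) s t y1 y2 y3 = cross_form y1 y3.
Proof.
move=> st_neq; have ts_neq : t != s by rewrite eq_sym.
rewrite /unfold_form /Esstt /tadd /outer4 /ebasis !eqxx (negbTE st_neq) (negbTE ts_neq) /=.
by rewrite /cross_form; ring.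
Qed.

Lemma unfold_form_cps_decomp n (A : tensor4 n) r (lam : 'I_r -> C) (a : 'I_r -> vec n)
    (s t : 'I_n) (y1 y2 y3 : C) :
  cps_decomp A lam a ->
  unfold_form A s t y1 y2 y3 = \sum_(m < r) lam m *
    ((veronese_form (a m s) (a m t) y1 y2 y3)^* * veronese_form (a m s) (a m t) y1 y2 y3).
Proof.
move=> [_ decA]; rewrite /unfold_form !decA !mulr_sumr !mulr_suml -!big_split /=.
apply: eq_bigr => m _; rewrite /veronese_form /outer4 /vconj !(conjCD, conjCM, conjCK).
ring.
Qed.

Lemma cps_decomp0 n (A : tensor4 n) (lam : 'I_0 -> C) (a : 'I_0 -> vec n) i j k l :
  cps_decomp A lam a -> A i j k l = 0.
Proof. by move=> [_ decA]; rewrite decA big_ord0. Qed.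

Lemma cps_decomp_is_CPS n (A : tensor4 n) r (lam : 'I_r -> C) (a : 'I_r -> vec n) :
  cps_decomp A lam a -> is_CPS A.
Proof.
move=> [lam_real decA] i j k l; rewrite !decA conjC_sum; split; last split.
- apply: eq_bigr => m _; rewrite conjCM (conj_Creal (lam_real m)) /outer4 /vconj.
  by rewrite !conjCM !conjCK; ring.
- by apply: eq_bigr => m _; rewrite /outer4; ring.
- by apply: eq_bigr => m _; rewrite /outer4; ring.
Qed.

Lemma card_gt1_avoid (T : finType) (P : pred T) (x0 : T) :
  (forall x, exists2 y, y != x & P y) -> (1 < #|P|)%N.
Proof.
move=> avoid; have [y1 _ Py1] := avoid x0; have [y2 y21 Py2] := avoid y1.
have sub : [set y2; y1] \subset P by apply/subsetP => y; rewrite !inE => /orP[]/eqP->.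
by have := subset_leq_card sub; rewrite cards2 y21.
Qed.

Section CrossVeronese.

Variable sg : C.
Hypothesis sg_real : sg^* = sg.
Hypothesis sg_sqr : sg * sg = 1.

Let sg_realC : sg \is Num.real. Proof. exact/CrealP. Qed.

Lemma veronese_kernel_cross (x y : C) : x * y != 0 ->
  exists y1 y2 y3, veronese_form x y y1 y2 y3 = 0 /\ sg * cross_form y1 y3 = -2.
Proof.
rewrite -conjC_eq0 conjCM => xy_neq0.
exists 1, (- ((x * x)^* - sg * (y * y)^*) / (x * y)^*), (- sg); split.
  rewrite /veronese_form; field.
  by move: xy_neq0; rewrite mulf_eq0 negb_or andbC.
by rewrite /cross_form conjCN sg_real conjC1; ring: sg_sqr.
Qed.

Lemma cross_veronese_not_psd_y0 (x c : C) : 0 <= c ->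
  exists y1 y2 y3, let L := veronese_form x 0 y1 y2 y3 in
    sg * cross_form y1 y3 + c * (L^* * L) < 0.
Proof.
move=> c_ge0; set K := c * ((x * x) * (x * x)^*).
have K_ge0 : 0 <= K by rewrite mulr_ge0 // mul_conjC_ge0.
have K1_real : (K + 1)^* = K + 1.
  by apply: conj_Creal; apply: ger0_real; rewrite addr_ge0.
have c_real : c^* = c by apply: conj_Creal; apply: ger0_real.
exists (- sg), 0, (K + 1) => /=.
suff -> : sg * cross_form (- sg) (K + 1) +
    c * ((veronese_form x 0 (- sg) 0 (K + 1))^* * veronese_form x 0 (- sg) 0 (K + 1))
    = - (K + 2) by rewrite oppr_lt0 ltr_wpDl.
rewrite /cross_form /veronese_form K1_real !(conjCD, conjCM, conjCN, conjC0).
by rewrite conjCK sg_real c_real /K; ring: sg_sqr.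
Qed.

Lemma cross_veronese_not_psd (x y c : C) : 0 <= c ->
  exists y1 y2 y3, let L := veronese_form x y y1 y2 y3 in
    sg * cross_form y1 y3 + c * (L^* * L) < 0.
Proof.
move=> c_ge0; have [xy0|xy_neq0] := eqVneq (x * y) 0; last first.
  have [y1 [y2 [y3 [L0 cross_neg]]]] := veronese_kernel_cross xy_neq0.
  by exists y1, y2, y3; rewrite /= L0 cross_neg mulr0 mulr0 addr0 oppr_lt0.
move/eqP: xy0; rewrite mulf_eq0 => /orP[/eqP x0 | /eqP ->].
  have [y1 [y2 [y3 H]]] := cross_veronese_not_psd_y0 y c_ge0.
  by exists y3, y2, y1; rewrite /= x0 veronese_formC cross_formC.
exact: cross_veronese_not_psd_y0.
Qed.

Lemma cps_decomp_Esstt_sign n (s t : 'I_n) r (lam : 'I_r -> C) (a : 'I_r -> vec n)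
    (m0 : 'I_r) :
  s != t -> cps_decomp (Esstt s t) lam a -> exists2 m, m != m0 & sg * lam m < 0.
Proof.
move=> st_neq decA; have lam_real := decA.1.
case: (pickP [pred m | (m != m0) && (sg * lam m < 0)]) => [m /andP[]|other_ge0].
  by exists m.
have [y1 [y2 [y3]]] := cross_veronese_not_psd (a m0 s) (a m0 t) (normr_ge0 (lam m0)).
set L := veronese_form _ _ _ _ _ => /= /lt_geF/negbT/negP[].
have sqr_ge0 (z : C) : 0 <= z^* * z by rewrite mulrC mul_conjC_ge0.
rewrite -(unfold_form_Esstt y1 y2 y3 st_neq) (unfold_form_cps_decomp _ _ _ _ _ decA).
rewrite mulr_sumr (bigD1 m0) //= -/L -addrAC.
apply: addr_ge0; last first.
  apply: sumr_ge0 => m m_neq; rewrite mulrA mulr_ge0 //.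
  have := other_ge0 m; rewrite /= m_neq /= => /negbT.
  by rewrite -real_leNgt ?rpred0 ?rpredM ?sg_realC ?lam_real.
rewrite mulrA -mulrDl mulr_ge0 // -(addNr `|lam m0|) lerD2r.
apply: real_lerNnormlW; first by rewrite rpredM ?sg_realC ?lam_real.
suff norm_sg : `|sg| = 1 by rewrite normrM norm_sg mul1r.
by apply/eqP; rewrite -(@pexpr_eq1 _ _ 2) // -normrX expr2 sg_sqr normr1.
Qed.

End CrossVeronese.

Lemma cps_decomp_Esstt_size n (s t : 'I_n) r :
  s != t -> has_cps_decomp (Esstt s t) r -> (4 <= r)%N.
Proof.
move=> st_neq [lam [a decA]].
case: r lam a decA => [|r] lam a decA.
  have := cps_decomp0 s s t t decA; rewrite /Esstt /tadd /outer4 /ebasis !eqxx.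
  rewrite (negbTE st_neq) eq_sym (negbTE st_neq) /= !mul1r !mulr0 addr0.
  by move/eqP; rewrite oner_eq0.
have two_signs (sg : C) : sg^* = sg -> sg * sg = 1 -> (1 < #|[pred m | (sg * lam m < 0)%R]|)%N.
  move=> sg_real sg_sqr; apply: (card_gt1_avoid ord0) => m0.
  exact: (cps_decomp_Esstt_sign sg_real sg_sqr m0 st_neq decA).
have := two_signs 1 (conjC1 _) (mulr1 1).
have := two_signs (-1) (conjCN1 _) (etrans (mulrNN 1 1) (mulr1 1)).
set neg := [pred m | 1 * lam m < 0]; set pos := [pred m | -1 * lam m < 0] => pos2 neg2.
have pos_sub : pos \subset [predC neg].
  by apply/subsetP => m; rewrite !inE mulN1r oppr_lt0 mul1r => /lt_gtF ->.
rewrite -(card_ord r.+1) -(cardC neg).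
exact: leq_trans (leq_add neg2 (subset_leq_card pos_sub)).
Qed.

Definition Esstt_weight (m : 'I_4) : C :=
  match val m with 0%N | 1%N => 1 / 4 | _ => - (1 / 4) end.

Definition Esstt_vector n (s t : 'I_n) (m : 'I_4) : vec n :=
  match val m with
  | 0%N => vadd (ebasis s) (ebasis t)
  | 1%N => vadd (ebasis s) (vscale (-1) (ebasis t))
  | 2%N => vadd (ebasis s) (vscale 'i (ebasis t))
  | _ => vadd (ebasis s) (vscale (- 'i) (ebasis t))
  end.

Lemma cps_decomp_Esstt n (s t : 'I_n) :
  cps_decomp (Esstt s t) Esstt_weight (Esstt_vector s t).
Proof.
have quarter : (4 : C)^-1 * 4 = 1 by rewrite mulVf // pnatr_eq0.
split=> [m | i j k l].
  by rewrite /Esstt_weight; case: (val m) => [|[|?]]; rewrite ?rpredN rpred_div ?rpred1 ?rpred_nat.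
rewrite !big_ord_recr big_ord0 /= /Esstt_weight /Esstt_vector /=.
rewrite /Esstt /tadd /outer4 /vconj /vadd /vscale /ebasis.
rewrite !(conjCD, conjCM, conjCN, conjC_nat, conjCi, conjC1).
ring: (@mulCii C) quarter.
Qed.

Lemma Esstt_expand n (s t : 'I_n) :
  let es := ebasis s in let et := ebasis t in
  let bp := vadd es (vscale 'i et) in let bm := vadd es (vscale (- 'i) et) in
  Esstt s t =
    tscale (1 / 4)
      (tadd (tadd (tpow4 (vadd es et)) (tpow4 (vadd es (vscale (-1) et))))
            (tadd (tscale (-1) (outer4 bp bp bm bm)) (tscale (-1) (outer4 bm bm bp bp)))).
Proof.
have quarter : (4 : C)^-1 * 4 = 1 by rewrite mulVf // pnatr_eq0.
do 4!apply: functional_extensionality_dep => ?.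
rewrite /Esstt /tscale /tadd /tpow4 /outer4 /vadd /vscale /ebasis.
ring: (@mulCii C) quarter.
Qed.

Lemma cps_rank_ebasis4 n (s : 'I_n) :
  cps_rank (outer4 (ebasis s) (ebasis s) (ebasis s) (ebasis s)) 1.
Proof.
have dec : cps_decomp (outer4 (ebasis s) (ebasis s) (ebasis s) (ebasis s))
    (fun _ => 1) (fun _ : 'I_1 => ebasis s).
  split=> [_ | i j k l]; first exact: rpred1.
  by rewrite big_ord1 /outer4 /vconj /ebasis !(conjCM, conjC_nat) mul1r.
split; first exact: cps_decomp_is_CPS dec.
split; first by exists (fun _ => 1), (fun _ => ebasis s).
case=> // [[lam [a dec0]]]; move: (cps_decomp0 s s s s dec0).
by rewrite /outer4 /ebasis eqxx !mulr1 => /eqP; rewrite oner_eq0.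
Qed.

Lemma cps_rank_Esstt n (s t : 'I_n) : s != t -> cps_rank (Esstt s t) 4.
Proof.
move=> st_neq; split; first exact: cps_decomp_is_CPS (cps_decomp_Esstt s t).
split; first by exists Esstt_weight, (Esstt_vector s t); exact: cps_decomp_Esstt.
by move=> r; apply: cps_decomp_Esstt_size.
Qed.

Theorem proposition3p1 (n : nat) (hn : (2 <= n)%N) :
  (forall s : 'I_n,
     cps_rank (outer4 (ebasis s) (ebasis s) (ebasis s) (ebasis s)) 1) /\
  (forall s t : 'I_n, s != t ->
     let es := ebasis s in
     let et := ebasis t in
     let ap := vadd es et in
     let am := vadd es (vscale (-1) et) in
     let bp := vadd es (vscale 'i et) in
     let bm := vadd es (vscale (- 'i) et) in
     cps_rank (Esstt s t) 4 /\
     Esstt s t =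
       tscale (1 / 4)
         (tadd (tadd (tpow4 ap) (tpow4 am))
               (tadd (tscale (-1) (outer4 bp bp bm bm))
                     (tscale (-1) (outer4 bm bm bp bp)))) /\
     @cps_rank_decomp _ (Esstt s t) 4
       (fun m : 'I_4 => match val m with 0%N | 1%N => 1 / 4 | _ => - (1 / 4) end)
       (fun m : 'I_4 => match val m with 0%N => ap | 1%N => am | 2%N => bp | _ => bm end)).
Proof.
split=> [s | s t st_neq]; first exact: cps_rank_ebasis4.
split; first exact: cps_rank_Esstt.
split; first exact: Esstt_expand.
split; [exact: cps_rank_Esstt | exact: cps_decomp_Esstt].
Qed.
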